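(* The assignment $\varphi(\ast)=\ast$, $\varphi(1)={\tt M}$, $\varphi(s)(v,w)=(w{\tt l},v{\tt r})$, $\varphi(N)(v)=v{\tt t}$, $\varphi(T_2)(v,w)=(v{\tt t},w{\tt t})$, $\varphi(T_3)(v,w,z)=(v{\tt t},w{\tt t},z{\tt t})$, and $\varphi(\rho)=\langle\varphi({\tt s}_2\rho),\varphi({\tt t}_2\rho)\rangle$ for each $3$-generator $\rho\in R_3$, extends in a unique way to a $3$-functor $\varphi:\mathbf{Toff}\to\mathbf{Move}$.
   Context: $\mathbf{Toff}$ is the free strict $3$-category generated by: one $0$-cell $\ast$; one $1$-generator, the wire $1:\ast\to\ast$; four $2$-generators $s:2\Rightarrow2$ (SWAP), $N:1\Rightarrow1$ (NOT), $T_2:2\Rightarrow2$, $T_3:3\Rightarrow3$; and the set $R_3$ of $3$-generators listed below. Write $\star_0$ for parallel composition (left to right), $\star_1$ for sequential composition (diagrammatic order), $1$ also for the identity $2$-cell on one wire and $\mathrm{id}_n$ for the identity $2$-cell on $n$ wires. Let $L_3=(s\star_01)\star_1(1\star_0s)$, $L_4=(s\star_01\star_01)\star_1(1\star_0s\star_01)\star_1(1\star_01\star_0s)$, $L'_3=(1\star_0s)\star_1(s\star_01)$, $L'_4=(1\star_01\star_0s)\star_1(1\star_0s\star_01)\star_1(s\star_01\star_01)$. $R_3$ consists of: $s\star_1s\Rrightarrow\mathrm{id}_2$; $(s\star_01)\star_1(1\star_0s)\star_1(s\star_01)\Rrightarrow(1\star_0s)\star_1(s\star_01)\star_1(1\star_0s)$;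 $N\star_1N\Rrightarrow\mathrm{id}_1$; $T_2\star_1T_2\Rrightarrow\mathrm{id}_2$; $T_3\star_1T_3\Rrightarrow\mathrm{id}_3$; $s\star_1(N\star_01)\Rrightarrow(1\star_0N)\star_1s$; $s\star_1(1\star_0N)\Rrightarrow(N\star_01)\star_1s$; $L_3\star_1(T_2\star_01)\Rrightarrow(1\star_0T_2)\star_1L_3$; $L'_3\star_1(1\star_0T_2)\Rrightarrow(T_2\star_01)\star_1L'_3$; $L_4\star_1(T_3\star_01)\Rrightarrow(1\star_0T_3)\star_1L_4$; $L'_4\star_1(1\star_0T_3)\Rrightarrow(T_3\star_01)\star_1L'_4$; $(s\star_01)\star_1T_3\Rrightarrow T_3\star_1(s\star_01)$. Cells are taken modulo the strict $3$-category axioms. $\mathbf{Move}$: ${\tt M}$ is the free monoid on letters ${\tt l},{\tt r},{\tt t}$ (words written left to right, concatenation $v{\tt t}$ appends ${\tt t}$), ordered by $<_{\tt M}$: first by length, then lexicographically with ${\tt t}<{\tt r}<{\tt l}$; ${\tt M}^n$ carries the product order ($\vec x<_{{\tt M}^n}\vec y$ iff componentwise $\le_{\tt M}$ and $\vec x\ne\vec y$). $\mathbf{Move}$ has one $0$-cell $\ast$, $1$-cells ${\tt M}^n$ (${\tt M}^n\star_0{\tt M}^m={\tt M}^{n+m}$), $2$-cells the strictly monotone maps ${\tt M}^n\to{\tt M}^n$ ($\star_0$ = cartesian product, $\star_1$ = composition of maps), and $3$-cells the pairs $\langle f,g\rangle$ with $f\ge_2 g$, where $f<_2g$ iff $f(\vec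 x)<_{{\tt M}^n}g(\vec x)$ for all $\vec x$, and $f\le_2 g$ iff $f=g$ or $f<_2 g$; compositions $\langle f,g\rangle\star_0\langle f',g'\rangle=\langle f\times f',g\times g'\rangle$, $\langle f,g\rangle\star_1\langle f',g'\rangle=\langle f'\circ f,g'\circ g\rangle$, $\langle f,g\rangle\star_2\langle g,h\rangle=\langle f,h\rangle$. *)

From HB Require Import structures.
From mathcomp Require Import all_boot.
Set Implicit Arguments.
Unset Strict Implicit.
Unset Printing Implicit Defensive.

Inductive letter := Ll | Lr | Lt.

Definition letter_rank (a : letter) : nat :=
  match a with Lt => 0 | Lr => 1 | Ll => 2 end.

Lemma letter_rank_inj : injective letter_rank.
Proof. by case; case. Qed.

HB.instance Definition _ := Equality.copy letter (inj_type letter_rank_inj).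

(* words of the free monoid M on l, r, t; v ++ [:: a] is "v a" *)
Definition M := seq letter.

(* lexicographic order (for words of equal length), t < r < l *)
Fixpoint lexle (v w : M) : bool :=
  match v, w with
  | [::], _ => true
  | _ :: _, [::] => false
  | a :: v', b :: w' =>
      (letter_rank a < letter_rank b) || ((a == b) && lexle v' w')
  end.

Definition leM (v w : M) : bool :=
  (size v < size w) || ((size v == size w) && lexle v w).

Definition ltMn n (x y : n.-tuple M) : bool :=
  [forall i, leM (tnth x i) (tnth y i)] && (x != y).

(* 2-cells of Move: strictly monotone maps M^n -> M^n *)
Definition strict_mono n (f : n.-tuple M -> n.-tuple M) : Prop :=
  forall x y, ltMn x y -> ltMn (f x) (f y).

Definition ge2 n (f g : n.-tuple M -> n.-tuple M) : Prop :=
  f =1 g \/ (forall x, ltMn (g x) (f x)).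

(* *_0 in Move : cartesian product of maps, M^(n+m) = M^n x M^m *)
Definition lsplit n m (x : (n + m).-tuple M) : n.-tuple M :=
  [tuple tnth x (lshift m i) | i < n].
Definition rsplit n m (x : (n + m).-tuple M) : m.-tuple M :=
  [tuple tnth x (rshift n i) | i < m].
Definition prodmap n m (f : n.-tuple M -> n.-tuple M)
  (g : m.-tuple M -> m.-tuple M) (x : (n + m).-tuple M) : (n + m).-tuple M :=
  cat_tuple (f (lsplit x)) (g (rsplit x)).

(* 3-cells of Move: pairs <f, g> of 2-cells with f >=_2 g *)
Record cell3M (n : nat) := Cell3M {
  c3s : n.-tuple M -> n.-tuple M;
  c3t : n.-tuple M -> n.-tuple M;
  c3s_mono : strict_mono c3s;
  c3t_mono : strict_mono c3t;
  c3_ge : ge2 c3s c3t }.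

(*  0-cell: *;  1-cells: n = 1 *_0 ... *_0 1 (n wires)                   *)

(* 2-cell terms, indexed by their (source = target) number of wires *)
Inductive tm2 : nat -> Type :=
| GS  : tm2 2
| GN  : tm2 1
| GT2 : tm2 2
| GT3 : tm2 3
| Id2 (n : nat) : tm2 n
| C0 n m : tm2 n -> tm2 m -> tm2 (n + m)
| C1 n : tm2 n -> tm2 n -> tm2 n.                (* *_1, diagrammatic order *)

Arguments C0 {n m}.
Arguments C1 {n}.

Definition cast2 n m (e : n = m) (f : tm2 n) : tm2 m := eq_rect n tm2 f m e.

(* equality of 2-cells in the free strict 2-category (the 2-cells of Toff):
   congruence generated by the strict 2-category axioms *)
Inductive eq2 : forall n, tm2 n -> tm2 n -> Prop :=
| e_refl n (f : tm2 n) : eq2 f f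
| e_sym n (f g : tm2 n) : eq2 f g -> eq2 g f
| e_trans n (f g h : tm2 n) : eq2 f g -> eq2 g h -> eq2 f h
| e_C0 n m (f f' : tm2 n) (g g' : tm2 m) :
    eq2 f f' -> eq2 g g' -> eq2 (C0 f g) (C0 f' g')
| e_C1 n (f f' g g' : tm2 n) :
    eq2 f f' -> eq2 g g' -> eq2 (C1 f g) (C1 f' g')
| e_C1A n (f g h : tm2 n) : eq2 (C1 (C1 f g) h) (C1 f (C1 g h))
| e_C1l n (f : tm2 n) : eq2 (C1 (Id2 n) f) f
| e_C1r n (f : tm2 n) : eq2 (C1 f (Id2 n)) f
| e_C0A n m k (f : tm2 n) (g : tm2 m) (h : tm2 k) :
    eq2 (C0 (C0 f g) h) (cast2 (addnA n m k) (C0 f (C0 g h)))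
| e_C0l n (f : tm2 n) : eq2 (cast2 (add0n n) (C0 (Id2 0) f)) f
| e_C0r n (f : tm2 n) : eq2 (cast2 (addn0 n) (C0 f (Id2 0))) f
| e_Id n m : eq2 (C0 (Id2 n) (Id2 m)) (Id2 (n + m))
| e_xch n m (f f' : tm2 n) (g g' : tm2 m) :
    eq2 (C1 (C0 f g) (C0 f' g')) (C0 (C1 f f') (C1 g g')).

Inductive gen3 :=
| R_ss | R_ybe | R_NN | R_T2T2 | R_T3T3 | R_sN1 | R_s1N
| R_L3 | R_L3' | R_L4 | R_L4' | R_sT3.

Definition gen3_ar (r : gen3) : nat :=
  match r with
  | R_ss => 2 | R_ybe => 3 | R_NN => 1 | R_T2T2 => 2 | R_T3T3 => 3
  | R_sN1 => 2 | R_s1N => 2 | R_L3 => 3 | R_L3' => 3 | R_L4 => 4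
  | R_L4' => 4 | R_sT3 => 3
  end.

Definition one := Id2 1.
Definition tL3 : tm2 3 := C1 (C0 GS one) (C0 one GS).
Definition tL4 : tm2 4 :=
  C1 (C1 (C0 (C0 GS one) one) (C0 (C0 one GS) one)) (C0 (C0 one one) GS).
Definition tL3' : tm2 3 := C1 (C0 one GS) (C0 GS one).
Definition tL4' : tm2 4 :=
  C1 (C1 (C0 (C0 one one) GS) (C0 (C0 one GS) one)) (C0 (C0 GS one) one).

Definition gen3_src (r : gen3) : tm2 (gen3_ar r) :=
  match r as r return tm2 (gen3_ar r) with
  | R_ss => C1 GS GS
  | R_ybe => C1 (C1 (C0 GS one) (C0 one GS)) (C0 GS one)
  | R_NN => C1 GN GN
  | R_T2T2 => C1 GT2 GT2
  | R_T3T3 => C1 GT3 GT3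
  | R_sN1 => C1 GS (C0 GN one)
  | R_s1N => C1 GS (C0 one GN)
  | R_L3 => C1 tL3 (C0 GT2 one)
  | R_L3' => C1 tL3' (C0 one GT2)
  | R_L4 => C1 tL4 (C0 GT3 one)
  | R_L4' => C1 tL4' (C0 one GT3)
  | R_sT3 => C1 (C0 GS one) GT3
  end.

Definition gen3_tgt (r : gen3) : tm2 (gen3_ar r) :=
  match r as r return tm2 (gen3_ar r) with
  | R_ss => Id2 2
  | R_ybe => C1 (C1 (C0 one GS) (C0 GS one)) (C0 one GS)
  | R_NN => Id2 1
  | R_T2T2 => Id2 2
  | R_T3T3 => Id2 3
  | R_sN1 => C1 (C0 one GN) GS
  | R_s1N => C1 (C0 GN one) GS
  | R_L3 => C1 (C0 one GT2) tL3
  | R_L3' => C1 (C0 GT2 one) tL3'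
  | R_L4 => C1 (C0 one GT3) tL4
  | R_L4' => C1 (C0 GT3 one) tL4'
  | R_sT3 => C1 GT3 (C0 GS one)
  end.

(* 3-cell terms of Toff, indexed by (representatives of) source and target *)
Inductive tm3 : forall n, tm2 n -> tm2 n -> Type :=
| Gen3 (r : gen3) : tm3 (gen3_src r) (gen3_tgt r)
| Id3 n (f : tm2 n) : tm3 f f
| C03 n m (f g : tm2 n) (f' g' : tm2 m) :
    tm3 f g -> tm3 f' g' -> tm3 (C0 f f') (C0 g g')
| C13 n (f g h k : tm2 n) :
    tm3 f g -> tm3 h k -> tm3 (C1 f h) (C1 g k)
| C23 n (f g g' h : tm2 n) :
    tm3 f g -> eq2 g g' -> tm3 g' h -> tm3 f h.

(*  3-functors Toff -> Move (with phi( * ) = *, phi(1) = M, hence       *)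
(*  phi(n wires) = M^n)                                                 *)

Record functor3 := Functor3 {
  F2 : forall n, tm2 n -> n.-tuple M -> n.-tuple M;
  F2_wd : forall n (f g : tm2 n), eq2 f g -> F2 f =1 F2 g;
  F2_mono : forall n (f : tm2 n), strict_mono (F2 f);
  F2_id : forall n, F2 (Id2 n) =1 id;
  F2_C0 : forall n m (f : tm2 n) (g : tm2 m), F2 (C0 f g) =1 prodmap (F2 f) (F2 g);
  F2_C1 : forall n (f g : tm2 n), F2 (C1 f g) =1 F2 g \o F2 f;
  F3 : forall n (f g : tm2 n), tm3 f g -> cell3M n;
  F3_src : forall n (f g : tm2 n) (a : tm3 f g), c3s (F3 a) =1 F2 f;
  F3_tgt : forall n (f g : tm2 n) (a : tm3 f g), c3t (F3 a) =1 F2 g;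
  F3_id : forall n (f : tm2 n),
    c3s (F3 (Id3 f)) =1 F2 f /\ c3t (F3 (Id3 f)) =1 F2 f;
  F3_C0 : forall n m (f g : tm2 n) (f' g' : tm2 m) (a : tm3 f g) (b : tm3 f' g'),
    c3s (F3 (C03 a b)) =1 prodmap (c3s (F3 a)) (c3s (F3 b)) /\
    c3t (F3 (C03 a b)) =1 prodmap (c3t (F3 a)) (c3t (F3 b));
  F3_C1 : forall n (f g h k : tm2 n) (a : tm3 f g) (b : tm3 h k),
    c3s (F3 (C13 a b)) =1 c3s (F3 b) \o c3s (F3 a) /\
    c3t (F3 (C13 a b)) =1 c3t (F3 b) \o c3t (F3 a);
  F3_C2 : forall n (f g g' h : tm2 n) (a : tm3 f g) (e : eq2 g g') (b : tm3 g' h),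
    c3s (F3 (C23 a e b)) =1 c3s (F3 a) /\ c3t (F3 (C23 a e b)) =1 c3t (F3 b)
}.

Definition snoc (v : M) (a : letter) : M := rcons v a.

Definition phiS (x : 2.-tuple M) : 2.-tuple M :=
  [tuple snoc (tnth x (@Ordinal 2 1 isT)) Ll; snoc (tnth x (@Ordinal 2 0 isT)) Lr].
Definition phiN (x : 1.-tuple M) : 1.-tuple M := [tuple of map (snoc^~ Lt) x].
Definition phiT2 (x : 2.-tuple M) : 2.-tuple M := [tuple of map (snoc^~ Lt) x].
Definition phiT3 (x : 3.-tuple M) : 3.-tuple M := [tuple of map (snoc^~ Lt) x].

(* phi extends the assignment (on 3-generators, phi(rho) =
   <phi(s_2 rho), phi(t_2 rho)> is enforced by F3_src / F3_tgt) *)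
Definition extends_assignment (F : functor3) : Prop :=
  [/\ F2 F GS =1 phiS, F2 F GN =1 phiN, F2 F GT2 =1 phiT2 & F2 F GT3 =1 phiT3].

Definition same_functor (F G : functor3) : Prop :=
  (forall n (f : tm2 n), F2 F f =1 F2 G f) /\
  (forall n (f g : tm2 n) (a : tm3 f g),
      c3s (F3 F a) =1 c3s (F3 G a) /\ c3t (F3 F a) =1 c3t (F3 G a)).

From mathcomp Require Import all_boot.
Set Implicit Arguments.
Unset Strict Implicit.
Unset Printing Implicit Defensive.

(* Every 2-cell term is interpreted as a map on lists of words (lists rather
   than tuples, so that the associativity of *_0 needs no casts): a generator
   appends one letter to each of its wires, *_0 acts on the two halves of the
   list and *_1 composes.  Appending a fixed letter is strictly monotone for
   the length-lexicographic order, and the product order is compatible with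
   splitting a list in two, so every 2-cell becomes a strictly monotone map.
   For each 3-generator the target produces, wire by wire, words that are
   proper prefixes of, or of the same length and lexicographically below, those
   of the source; strict monotonicity carries this inequality through *_0, *_1
   and *_2.  Uniqueness holds because the 2-cells are generated by s, N, T_2
   and T_3, and a 3-cell of Move is determined by its source and target. *)

Lemma lexle_refl v : lexle v v.
Proof. by elim: v => //= a v ->; rewrite eqxx orbT. Qed.

Lemma lexle_trans u v w : lexle u v -> lexle v w -> lexle u w.
Proof.
elim: u v w => [|x u IH] [|y v] [|z w] //=.
case/orP=> [xy|/andP[/eqP<- uv]]; case/orP=> [yz|/andP[/eqP<- vw]].
- by rewrite (ltn_trans xy yz).
- by rewrite xy.
- by rewrite yz.
- by rewrite eqxx (IH _ _ uv vw) orbT.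
Qed.

Lemma lexle_anti u v : size u = size v -> lexle u v -> lexle v u -> u = v.
Proof.
elim: u v => [|x u IH] [|y v] //= [] sz.
case/orP=> [xy|/andP[/eqP<- uv]]; case/orP=> [yx|/andP[/eqP yx vu]].
- by move: (ltn_trans xy yx); rewrite ltnn.
- by move: xy; rewrite yx ltnn.
- by move: yx; rewrite ltnn.
- by rewrite (IH _ sz uv vu).
Qed.

Lemma lexle_cat2l a u w : lexle (a ++ u) (a ++ w) = lexle u w.
Proof. by elim: a => //= x a ->; rewrite ltnn eqxx. Qed.

Lemma lexle_rcons2r a v w :
  size v = size w -> lexle (rcons v a) (rcons w a) = lexle v w.
Proof.
elim: v w => [|x v IH] [|y w] //=; first by rewrite ltnn eqxx.
by case=> /IH ->.
Qed.

Lemma leM_refl v : leM v v.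
Proof. by rewrite /leM eqxx lexle_refl orbT. Qed.

Lemma leM_trans u v w : leM u v -> leM v w -> leM u w.
Proof.
rewrite /leM => /orP[uv|/andP[/eqP uv l1]] /orP[vw|/andP[/eqP vw l2]].
- by rewrite (ltn_trans uv vw).
- by rewrite -vw uv.
- by rewrite uv vw.
- by rewrite uv vw eqxx (lexle_trans l1 l2) orbT.
Qed.

Lemma leM_anti u v : leM u v -> leM v u -> u = v.
Proof.
rewrite /leM => /orP[uv|/andP[/eqP uv l1]] /orP[vu|/andP[/eqP vu l2]].
- by move: (ltn_trans uv vu); rewrite ltnn.
- by move: uv; rewrite vu ltnn.
- by move: vu; rewrite uv ltnn.
- exact: lexle_anti.
Qed.

Lemma leM_rcons2r a v w : leM (rcons v a) (rcons w a) = leM v w.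
Proof.
rewrite /leM !size_rcons ltnS eqSS.
by case: (ltngtP (size v) (size w)) => //= /lexle_rcons2r ->.
Qed.

Lemma leM_cat2l a u w : leM (a ++ u) (a ++ w) = leM u w.
Proof. by rewrite /leM !size_cat ltn_add2l eqn_add2l lexle_cat2l. Qed.

Lemma leM_catr a u : leM a (a ++ u).
Proof.
case: u => [|x u]; first by rewrite cats0 leM_refl.
by rewrite /leM size_cat /= -addn1 leq_add2l.
Qed.

Lemma eq_cat2l (a u w : M) : (a ++ u == a ++ w) = (u == w).
Proof. by elim: a => //= x a <-; rewrite eqseq_cons eqxx. Qed.

Lemma eq_catr (a u : M) : (a == a ++ u) = (u == [::]).
Proof. by rewrite -{1}(cats0 a) eq_cat2l eq_sym. Qed.

Definition leMs (s t : seq M) := all2 leM s t.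
Definition ltMs (s t : seq M) := leMs s t && (s != t).

Lemma leMs_refl s : leMs s s.
Proof. by elim: s => //= v s ->; rewrite leM_refl. Qed.

Lemma leMs_trans s t u : leMs s t -> leMs t u -> leMs s u.
Proof.
elim: s t u => [|v s IH] [|w t] [|x u] //= /andP[h1 h2] /andP[h3 h4].
by rewrite (leM_trans h1 h3) (IH _ _ h2 h4).
Qed.

Lemma leMs_anti s t : leMs s t -> leMs t s -> s = t.
Proof.
elim: s t => [|v s IH] [|w t] //= /andP[h1 h2] /andP[h3 h4].
by rewrite (leM_anti h1 h3) (IH _ h2 h4).
Qed.

Lemma ltMs_trans s t u : ltMs s t -> ltMs t u -> ltMs s u.
Proof.
move=> /andP[st ne] /andP[tu _]; rewrite /ltMs (leMs_trans st tu).
by apply: contraNneq ne => su; apply/eqP/(leMs_anti st); rewrite su.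
Qed.

Lemma leMs_cat s1 s2 t1 t2 : size s1 = size t1 ->
  leMs (s1 ++ s2) (t1 ++ t2) = leMs s1 t1 && leMs s2 t2.
Proof. by elim: s1 t1 => [|v s IH] [|w t] //= [] /IH ->; rewrite andbA. Qed.

Lemma ltMs_cat s1 s2 t1 t2 : size s1 = size t1 ->
  ltMs (s1 ++ s2) (t1 ++ t2) =
  [&& leMs s1 t1, leMs s2 t2 & (s1 != t1) || (s2 != t2)].
Proof. by move=> sz; rewrite /ltMs leMs_cat // eqseq_cat // negb_and andbA. Qed.

Lemma ltMs_map_rcons a s t :
  ltMs (map (rcons^~ a) s) (map (rcons^~ a) t) = ltMs s t.
Proof.
rewrite /ltMs (inj_eq (inj_map (@rcons_injl _ a))); congr (_ && _).
by elim: s t => [|v s IH] [|w t] //=; rewrite leM_rcons2r IH.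
Qed.

Definition size_stable n (p : seq M -> seq M) :=
  forall s, size s = n -> size (p s) = n.

Definition ltMs_mono n (p : seq M -> seq M) :=
  forall s t, size s = n -> size t = n -> ltMs s t -> ltMs (p s) (p t).

Definition ge_on n (p q : seq M -> seq M) :=
  (forall s, size s = n -> p s = q s) \/
  (forall s, size s = n -> ltMs (q s) (p s)).

Definition juxt n (p q : seq M -> seq M) (s : seq M) :=
  p (take n s) ++ q (drop n s).

Lemma size_takeD n m (s : seq M) : size s = n + m -> size (take n s) = n.
Proof. by move=> sz; rewrite size_takel // sz leq_addr. Qed.

Lemma size_dropD n m (s : seq M) : size s = n + m -> size (drop n s) = m.
Proof. by move=> sz; rewrite size_drop sz addKn. Qed.

Lemma juxt_size n m p q :
  size_stable n p -> size_stable m q -> size_stable (n + m) (juxt n p q).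
Proof.
by move=> hp hq s sz; rewrite size_cat hp ?hq ?(size_takeD sz) ?(size_dropD sz).
Qed.

Section StrictlyMonotone.

Variables (n : nat) (p : seq M -> seq M).
Hypothesis p_mono : ltMs_mono n p.

Lemma ltMs_mono_leMs s t : size s = n -> size t = n ->
  leMs s t -> leMs (p s) (p t).
Proof.
move=> ss st le_st; case: (eqVneq s t) => [->|ne]; first exact: leMs_refl.
by have /andP[] : ltMs (p s) (p t) by apply: p_mono; rewrite // /ltMs le_st.
Qed.

Lemma ltMs_mono_neq s t : size s = n -> size t = n ->
  leMs s t -> s != t -> p s != p t.
Proof.
move=> ss st le_st ne.
by have /andP[] : ltMs (p s) (p t) by apply: p_mono; rewrite // /ltMs le_st.
Qed.

End StrictlyMonotone.

Lemma ltMs_mono_juxt n m p q : size_stable n p ->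
  ltMs_mono n p -> ltMs_mono m q -> ltMs_mono (n + m) (juxt n p q).
Proof.
move=> p_size p_mono q_mono s t ss st.
have s1 := size_takeD ss; have t1 := size_takeD st.
have s2 := size_dropD ss; have t2 := size_dropD st.
rewrite -{1}(cat_take_drop n s) -{1}(cat_take_drop n t) ltMs_cat ?s1 ?t1 //.
case/and3P=> le1 le2 ne.
rewrite /juxt ltMs_cat ?p_size //.
rewrite (ltMs_mono_leMs p_mono) // (ltMs_mono_leMs q_mono) //=.
by case/orP: ne => ne; apply/orP;
  [left; apply: (ltMs_mono_neq p_mono) | right; apply: (ltMs_mono_neq q_mono)].
Qed.

Lemma ltMs_mono_comp n p q : size_stable n p ->
  ltMs_mono n p -> ltMs_mono n q -> ltMs_mono n (q \o p).
Proof.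
move=> p_size p_mono q_mono s t ss st /(p_mono _ _ ss st).
by apply: q_mono; apply: p_size.
Qed.

Lemma ge_on_juxt n m p p' q q' : size_stable n p -> size_stable n p' ->
  ge_on n p p' -> ge_on m q q' -> ge_on (n + m) (juxt n p q) (juxt n p' q').
Proof.
move=> p_size p'_size [Ep|Lp] [Eq|Lq].
- by left=> s ss; rewrite /juxt Ep ?Eq ?(size_takeD ss) ?(size_dropD ss).
all: right=> s ss; have s1 := size_takeD ss; have s2 := size_dropD ss.
all: rewrite /juxt ltMs_cat ?p_size ?p'_size //.
- by rewrite Ep // leMs_refl eqxx; case/andP: (Lq _ s2) => -> ->.
- by rewrite Eq // leMs_refl eqxx; case/andP: (Lp _ s1) => -> ->.
- by case/andP: (Lp _ s1) => -> ->; case/andP: (Lq _ s2) => -> ->.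
Qed.

Lemma ge_on_comp n p p' q q' : size_stable n p -> size_stable n p' ->
  ltMs_mono n q -> ge_on n p p' -> ge_on n q q' -> ge_on n (q \o p) (q' \o p').
Proof.
move=> p_size p'_size q_mono [Ep|Lp] [Eq|Lq].
- by left=> s ss /=; rewrite Ep // Eq // p'_size.
- by right=> s ss /=; rewrite Ep //; apply: Lq; apply: p'_size.
- right=> s ss /=; rewrite -Eq ?p'_size //.
  by apply: q_mono; rewrite ?p_size ?p'_size //; apply: Lp.
- right=> s ss /=; apply: (@ltMs_trans _ (q (p' s))).
    by apply: Lq; apply: p'_size.
  by apply: q_mono; rewrite ?p_size ?p'_size //; apply: Lp.
Qed.

Lemma ge_on_trans n p q q' r : ge_on n p q ->
  (forall s, size s = n -> q s = q' s) -> ge_on n q' r -> ge_on n p r.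
Proof.
move=> [E1|L1] Eq [E2|L2].
- by left=> s ss; rewrite E1 // Eq // E2.
- by right=> s ss; rewrite E1 // Eq //; apply: L2.
- by right=> s ss; rewrite -E2 // -Eq //; apply: L1.
- by right=> s ss; apply: ltMs_trans (L2 _ ss) _; rewrite -Eq //; apply: L1.
Qed.

Fixpoint phis n (f : tm2 n) : seq M -> seq M :=
  match f with
  | GS => fun s => [:: rcons (nth [::] s 1) Ll; rcons (nth [::] s 0) Lr]
  | GN | GT2 | GT3 => map (rcons^~ Lt)
  | Id2 _ => id
  | C0 n _ f g => juxt n (phis f) (phis g)
  | C1 _ f g => phis g \o phis f
  end.

Lemma phis_size n (f : tm2 n) : size_stable n (phis f).
Proof.
elim: f => [||||k|k l f IHf g IHg|k f IHf g IHg] /=;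
  try by move=> s sz; rewrite ?size_map.
- exact: juxt_size.
- by move=> s sz /=; rewrite IHg ?IHf.
Qed.

Lemma phis_cast n m (e : n = m) (f : tm2 n) : phis (cast2 e f) = phis f.
Proof. by case: m / e. Qed.

Lemma phis_wd n (f g : tm2 n) :
  eq2 f g -> forall s, size s = n -> phis f s = phis g s.
Proof.
elim=> {n f g} //= [n f g _ IH|n f g h _ IH1 _ IH2|n m f f' g g' _ IH1 _ IH2
  |n f f' g g' _ IH1 _ IH2|n m k f g h|n f|n f|n m|n m f f' g g'] s sz;
  rewrite ?phis_cast /= /juxt /=.
- by rewrite IH.
- by rewrite IH1 // IH2.
- by rewrite IH1 ?IH2 ?(size_takeD sz) ?(size_dropD sz).
- by rewrite IH1 // IH2 // phis_size.
- by rewrite take_takel ?leq_addr // drop_drop addnC take_drop -catA.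
- by rewrite take0 drop0.
- by rewrite take_oversize ?drop_oversize ?sz // cats0.
- by rewrite cat_take_drop.
- by rewrite take_size_cat ?drop_size_cat // phis_size // (size_takeD sz).
Qed.

Lemma phis_mono n (f : tm2 n) : ltMs_mono n (phis f).
Proof.
elim: f => [|||| k | k l f IHf g IHg | k f IHf g IHg] /=.
- move=> [|v [|w [|? ?]]] // [|v' [|w' [|? ?]]] // _ _.
  rewrite /ltMs /= !leM_rcons2r !andbT !eqseq_cons !eqseq_rcons !eqxx !andbT.
  by case/andP=> /andP[-> ->]; rewrite andbC.
- by move=> s t _ _; rewrite ltMs_map_rcons.
- by move=> s t _ _; rewrite ltMs_map_rcons.
- by move=> s t _ _; rewrite ltMs_map_rcons.
- by [].
- exact: ltMs_mono_juxt (phis_size f) IHf IHg.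
- exact: ltMs_mono_comp (phis_size f) IHf IHg.
Qed.

Lemma phis_gen3_lt r s : size s = gen3_ar r ->
  ltMs (phis (gen3_tgt r) s) (phis (gen3_src r) s).
Proof.
case: r; rewrite /= /one /tL3 /tL3' /tL4 /tL4' /= /juxt /=;
case: s => [|a [|b [|c [|d [|? ?]]]]] //= _;
rewrite /ltMs /= -?cats1 -?catA /= ?leM_refl ?leM_cat2l ?leM_catr
  ?eqseq_cons ?eq_cat2l ?eq_catr ?eqxx //=.
Qed.

Lemma phis_tm3_ge n (f g : tm2 n) (a : tm3 f g) : ge_on n (phis f) (phis g).
Proof.
elim: a => {n f g} [r | n f | n m f g f' g' _ IH1 _ IH2
  | n f g h k _ IH1 _ IH2 | n f g g' h _ IH1 e _ IH2].
- by right; apply: phis_gen3_lt.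
- by left.
- exact: ge_on_juxt (phis_size f) (phis_size g) IH1 IH2.
- exact: ge_on_comp (phis_size f) (phis_size g) (phis_mono h) IH1 IH2.
- exact: ge_on_trans IH1 (phis_wd e) IH2.
Qed.

Lemma leMs_nth s t : size s = size t ->
  leMs s t = [forall i : 'I_(size s), leM (nth [::] s i) (nth [::] t i)].
Proof.
move=> sz; apply/idP/forallP.
  elim: s t sz => [|v s IH] [|w t] //=; first by move=> _ _ [].
  case=> sz /andP[h1 h2] [[|i] /= hi] //.
  exact: (IH _ sz h2 (Ordinal (hi : i < size s))).
elim: s t sz => [|v s IH] [|w t] //= [] sz h.
rewrite (h ord0) /=; apply: IH => // i.
exact: (h (Ordinal (ltn_ord i : i.+1 < (size s).+1))).
Qed.

Lemma ltMnE n (x y : n.-tuple M) : ltMn x y = ltMs x y.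
Proof.
rewrite /ltMn /ltMs leMs_nth ?size_tuple //; congr (_ && _).
by apply/forallP/forallP => h i; have := h i; rewrite !(tnth_nth [::]).
Qed.

Lemma lsplitE n m (x : (n + m).-tuple M) : val (lsplit x) = take n x.
Proof.
apply: (@eq_from_nth _ [::]).
  by rewrite size_tuple (size_takeD (size_tuple x)).
move=> i; rewrite size_tuple => hi.
by rewrite -(tnth_nth _ _ (Ordinal hi)) tnth_mktuple nth_take // (tnth_nth [::]).
Qed.

Lemma rsplitE n m (x : (n + m).-tuple M) : val (rsplit x) = drop n x.
Proof.
apply: (@eq_from_nth _ [::]).
  by rewrite size_tuple (size_dropD (size_tuple x)).
move=> i; rewrite size_tuple => hi.
by rewrite -(tnth_nth _ _ (Ordinal hi)) tnth_mktuple nth_drop (tnth_nth [::]).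
Qed.

Definition phit n (f : tm2 n) (x : n.-tuple M) : n.-tuple M :=
  Tuple (introT eqP (phis_size f (size_tuple x))).

Lemma phit_wd n (f g : tm2 n) : eq2 f g -> phit f =1 phit g.
Proof. by move=> e x; apply: val_inj; apply: (phis_wd e); rewrite size_tuple. Qed.

Lemma phit_mono n (f : tm2 n) : strict_mono (phit f).
Proof. by move=> x y; rewrite !ltMnE; apply: phis_mono; rewrite size_tuple. Qed.

Lemma phit_id n : phit (Id2 n) =1 id.
Proof. by move=> x; apply: val_inj. Qed.

Lemma phit_C0 n m (f : tm2 n) (g : tm2 m) :
  phit (C0 f g) =1 prodmap (phit f) (phit g).
Proof.
by move=> x; apply: val_inj; rewrite /= /juxt -(lsplitE x) -(rsplitE x).
Qed.

Lemma phit_C1 n (f g : tm2 n) : phit (C1 f g) =1 phit g \o phit f.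
Proof. by move=> x; apply: val_inj. Qed.

Lemma phit_ge n (f g : tm2 n) (a : tm3 f g) : ge2 (phit f) (phit g).
Proof.
case: (phis_tm3_ge a) => [E|L]; [left | right] => x.
- by apply: val_inj; apply: E; rewrite size_tuple.
- by rewrite ltMnE; apply: L; rewrite size_tuple.
Qed.

Definition phi3 n (f g : tm2 n) (a : tm3 f g) : cell3M n :=
  Cell3M (phit_mono f) (phit_mono g) (phit_ge a).

Definition Phi : functor3.
Proof.
refine (@Functor3 phit phit_wd phit_mono phit_id phit_C0 phit_C1 phi3
  _ _ _ _ _ _) => //.
- by move=> n m f g f' g' a b; split; apply: phit_C0.
- by move=> n f g h k a b; split; apply: phit_C1.
Defined.

Lemma Phi_extends : extends_assignment Phi.
Proof.
split=> x; apply: val_inj.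
- by case: x => [[|a [|b [|? ?]]] //= ?].
- by case: x => [[|a [|? ?]] //= ?].
- by case: x => [[|a [|b [|? ?]]] //= ?].
- by case: x => [[|a [|b [|c [|? ?]]]] //= ?].
Qed.

Lemma extends_assignment_F2_unique F G :
  extends_assignment F -> extends_assignment G ->
  forall n (f : tm2 n), F2 F f =1 F2 G f.
Proof.
move=> [FS FN FT2 FT3] [GS' GN' GT2' GT3'] n f; elim: f => {n}.
- by move=> x; rewrite FS GS'.
- by move=> x; rewrite FN GN'.
- by move=> x; rewrite FT2 GT2'.
- by move=> x; rewrite FT3 GT3'.
- by move=> n x; rewrite !F2_id.
- by move=> n m f IHf g IHg x; rewrite !F2_C0 /prodmap IHf IHg.
- by move=> n f IHf g IHg x; rewrite !F2_C1 /= IHf IHg.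
Qed.

Theorem mainTheorem4 :
  (exists F : functor3, extends_assignment F) /\
  (forall F G : functor3,
      extends_assignment F -> extends_assignment G -> same_functor F G).
Proof.
split; first by exists Phi; exact: Phi_extends.
move=> F G extF extG; have F2FG := extends_assignment_F2_unique extF extG.
by split=> // n f g a; split=> x; rewrite ?F3_src ?F3_tgt F2FG.
Qed.
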